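(* Let $G=(V,E,p)$ be an influence graph with $V=\{1,\dots,n\}$ and let $(x_1,\dots,x_n)\in[0,1]^n$. For the Poisson process with rates $x_1,\dots,x_n$ described in the context, for every $t\in[0,1]$ and every fixed partial realization $\psi$ (that $\Psi(t)$ can take), $$\mathbb{E}\left[\frac{d f(\Psi(t))}{dt}\,\Big|\,\Psi(t)=\psi\right]\ge f^{+}(x_1,\dots,x_n)-\sigma(\Gamma(\psi)),$$ where the left side means $\lim_{dt\to 0^+}\frac{1}{dt}\mathbb{E}[f(\Psi(t+dt))-f(\Psi(t))\mid \Psi(t)=\psi]$.
   Context: IC model: each edge $(u,v)$ of $G$ has probability $p_{uv}\in[0,1]$; a realization (live-edge graph) $\phi$ contains each edge independently with probability $p_{uv}$, with distribution $\mathcal{P}$. $\Gamma(S,\phi)$ is the set of nodes reachable from $S$ in $\phi$ and $\sigma(S)=\mathbb{E}_{\Phi\sim\mathcal{P}}|\Gamma(S,\Phi)|$. Full-adoption feedback: selecting $u$ as a seed reveals the status of all out-going edges of every node reachable from $u$ in $\phi$. A partial realization $\psi$ records the seeds selected so far (the set ${\rm dom}(\psi)$) together with their feedback; $\Gamma(\psi)$ is the set of nodes reachable from ${\rm dom}(\psi)$ (determined by $\psi$) and $f(\psi)=|\Gamma(\psi)|$. An adaptive policy $\pi$ maps partial realizations to the next node to select; $V(\pi,\phi)$ is its seed set under $\phi$ and $\sigma(\pi)=\mathbb{E}_{\Phi\sim\mathcal{P}}|\Gamma(V(\pi,\Phi),\Phi)|$. Define $f^{+}(x_1,\dots,x_n)=\sup_\pi\{\sigma(\pi):\Pr_{\Phi\sim\mathcal{P}}[i\in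 V(\pi,\Phi)]=x_i\ \forall i\in[n]\}$. Poisson process: a realization $\phi\sim\mathcal{P}$ is drawn; there are $n$ independent Poisson clocks $C_1,\dots,C_n$, clock $C_i$ signalling at rate $x_i$; whenever $C_i$ signals, node $i$ is selected as a seed and its feedback under $\phi$ is observed. $\Psi(t)$ is the (random) partial realization at time $t$, with $\Psi(0)=\emptyset$. *)

From HB Require Import structures.
From mathcomp Require Import all_boot all_order all_algebra.
From mathcomp Require Import all_classical all_reals all_analysis.
Set Implicit Arguments. Unset Strict Implicit. Unset Printing Implicit Defensive.
Import Order.TTheory GRing.Theory Num.Theory.
Import numFieldNormedType.Exports.
Local Open Scope ring_scope.

(* Nodes are 'I_n.  The influence graph is given by p : 'I_n -> 'I_n -> R,
   p u v = probability of edge (u,v) (p u v = 0 for non-edges). *)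

Definition realization (n : nat) := {set 'I_n * 'I_n}.

Definition probR {R : realType} {n : nat} (p : 'I_n -> 'I_n -> R)
  (phi : realization n) : R :=
  \prod_(e : 'I_n * 'I_n) (if e \in phi then p e.1 e.2 else 1 - p e.1 e.2).

Definition reach {n : nat} (phi : realization n) (S : {set 'I_n}) : {set 'I_n} :=
  [set v | [exists u in S, connect [rel a b | (a, b) \in phi] u v]].

Definition sigma {R : realType} {n : nat} (p : 'I_n -> 'I_n -> R)
  (S : {set 'I_n}) : R :=
  \sum_(phi : realization n) probR p phi * #|reach phi S|%:R.

(* A partial realization: its domain (the seeds selected so far) together with
   the full-adoption feedback, recorded as the set of live edges among the
   out-going edges of the nodes reached from the seeds (the other out-going
   edges of reached nodes are thereby known to be dead). *)
Definition preal (n : nat) := ({set 'I_n} * {set 'I_n * 'I_n})%type.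

Definition observe {n : nat} (phi : realization n) (S : {set 'I_n}) : preal n :=
  (S, [set e in phi | e.1 \in reach phi S]).

Definition Gammap {n : nat} (psi : preal n) : {set 'I_n} := reach psi.2 psi.1.

Definition fval {R : realType} {n : nat} (psi : preal n) : R := #|Gammap psi|%:R.

(* Deterministic adaptive policy: next node to select, or None = stop. *)
Definition dpolicy (n : nat) := {ffun preal n -> option 'I_n}.

Definition pstep {n : nat} (pi : dpolicy n) (phi : realization n)
  (S : {set 'I_n}) : {set 'I_n} :=
  match pi (observe phi S) with Some i => i |: S | None => S end.

(* V(pi, phi): seed set of pi under phi (selecting an already selected node
   cannot change the state, i.e. amounts to stopping; n steps suffice). *)
Definition run {n : nat} (pi : dpolicy n) (phi : realization n) : {set 'I_n} :=
  iter n (pstep pi phi) (finset.set0 : {set 'I_n}).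

(* Randomized adaptive policy = probability distribution over deterministic ones. *)
Definition is_rpolicy {R : realType} {n : nat} (mu : dpolicy n -> R) : Prop :=
  (forall pi, 0 <= mu pi) /\ \sum_(pi : dpolicy n) mu pi = 1.

Definition selprob {R : realType} {n : nat} (p : 'I_n -> 'I_n -> R)
  (mu : dpolicy n -> R) (i : 'I_n) : R :=
  \sum_(pi : dpolicy n) mu pi *
    \sum_(phi : realization n) probR p phi * (i \in run pi phi)%:R.

Definition spread {R : realType} {n : nat} (p : 'I_n -> 'I_n -> R)
  (mu : dpolicy n -> R) : R :=
  \sum_(pi : dpolicy n) mu pi *
    \sum_(phi : realization n) probR p phi * #|reach phi (run pi phi)|%:R.

Definition fplus {R : realType} {n : nat} (p : 'I_n -> 'I_n -> R)
  (x : 'I_n -> R) : R :=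
  sup [set r : R | exists mu : dpolicy n -> R,
         [/\ is_rpolicy mu, (forall i, selprob p mu i = x i) & r = spread p mu]].

(* Poisson clocks: clock i (rate x i) has signalled in [0,t] with probability
   1 - exp(-x_i t); by independent increments it signals in (t, t+dt] with
   probability 1 - exp(-x_i dt), independently of the past and of the other
   clocks and of Phi.  S1 = set of clocks signalled by time t,
   S2 = set signalled by time t+dt. *)
Definition clock1 {R : realType} {n : nat} (x : 'I_n -> R) (t : R)
  (S1 : {set 'I_n}) : R :=
  \prod_(i : 'I_n) (if i \in S1 then 1 - expR (- (x i * t)) else expR (- (x i * t))).

Definition clock2 {R : realType} {n : nat} (x : 'I_n -> R) (t dt : R)
  (S1 S2 : {set 'I_n}) : R :=
  (S1 \subset S2)%:R *
  \prod_(i : 'I_n)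
    (if i \in S1 then 1 - expR (- (x i * t))
     else if i \in S2 then expR (- (x i * t)) * (1 - expR (- (x i * dt)))
     else expR (- (x i * (t + dt)))).

(* Pr[Psi(t) = psi], with Psi(t) = observe Phi S(t). *)
Definition probPsi {R : realType} {n : nat} (p : 'I_n -> 'I_n -> R)
  (x : 'I_n -> R) (t : R) (psi : preal n) : R :=
  \sum_(phi : realization n) \sum_(S1 : {set 'I_n})
     probR p phi * clock1 x t S1 * (observe phi S1 == psi)%:R.

Definition condDiff {R : realType} {n : nat} (p : 'I_n -> 'I_n -> R)
  (x : 'I_n -> R) (t dt : R) (psi : preal n) : R :=
  (\sum_(phi : realization n) \sum_(S1 : {set 'I_n}) \sum_(S2 : {set 'I_n})
     probR p phi * clock2 x t dt S1 S2 * (observe phi S1 == psi)%:R *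
     (fval (observe phi S2) - fval (observe phi S1)))
  / probPsi p x t psi.

(* Conditionally on [Psi(t) = psi], during [(t, t + dt]] the clock of a node
   [j] outside [dom(psi)] rings with probability [x_j dt + o(dt)] and two clocks
   ring with probability [o(dt)]; hence the conditional rate of growth of [f] is
   [sum_j x_j Delta_j], where [Delta_j] is the expected number of nodes reachable
   from [j] in the live-edge graph with [Gamma(psi)] deleted.  Those edges are
   independent of the edges leaving [Gamma(psi)], which alone determine the event
   [Psi(t) = psi], so [Delta_j] is the unconditional expected marginal spread
   [gain(Gamma(psi), j)].
   On the other hand, the same independence, applied step by step along the run
   of an adaptive policy [pi] (adaptive submodularity), gives
   [sigma(pi) <= sigma(G) + sum_j Pr[j in V(pi)] gain(G, j)] for every set [G];
   averaging over a randomized policy with selection probabilities [x] yields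
   [f^+(x) <= sigma(Gamma(psi)) + sum_j x_j gain(Gamma(psi), j)]. *)

From HB Require Import structures.
From mathcomp Require Import all_classical all_reals all_analysis.
From mathcomp Require Import all_boot all_order all_algebra ring.
Import Order.TTheory GRing.Theory Num.Theory.
Import numFieldNormedType.Exports.
Set Implicit Arguments. Unset Strict Implicit. Unset Printing Implicit Defensive.
Local Open Scope ring_scope.

Lemma connect_restrict (T : finType) (e e' : rel T) (A : pred T) :
  (forall u v, A u -> e u v -> A v /\ e' u v) ->
  forall u v, A u -> connect e u v -> A v /\ connect e' u v.
Proof.
move=> eA u v Au /connectP[s + ->] {v}.
elim: s u Au => [|w s IHs] u Au /=; first by split; last exact: connect0.
case/andP=> /(eA _ _ Au)[Aw e'uw] /(IHs _ Aw)[Av e'wv].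
by split; last exact: connect_trans (connect1 e'uw) e'wv.
Qed.

Lemma connect_avoid_or (T : finType) (e : rel T) (Y Z : pred T) :
  (forall u v, Z u -> e u v -> Z v) -> {subset Y <= Z} ->
  forall u v, ~~ Y u -> connect e u v ->
    Z v \/ connect [rel a b | [&& e a b, ~~ Y a & ~~ Y b]] u v.
Proof.
move=> eZ YZ u v Yu /connectP[s + ->] {v}.
elim: s u Yu => [|w s IHs] u Yu /=; first by right; exact: connect0.
case/andP=> euw ws; have [Yw | nYw] := boolP (Y w).
  left; have [] := @connect_restrict _ e e Z _ w (last w s) (YZ _ Yw) => //.
    by move=> a b Za eab; split; [exact: eZ eab|].
  by apply/connectP; exists s.
case: (IHs w nYw ws) => [|c]; [by left | right].
by apply: connect_trans c; apply: connect1; rewrite /= euw Yu.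
Qed.

Section Reachability.
Variable n : nat.
Implicit Types (phi : realization n) (S X Y : {set 'I_n}).

Local Notation live phi := [rel a b | (a, b) \in phi].

Lemma in_reach phi S v :
  (v \in reach phi S) = [exists u in S, connect (live phi) u v].
Proof. by rewrite inE. Qed.

Lemma sub_reach phi S : S \subset reach phi S.
Proof. by apply/subsetP=> u uS; rewrite in_reach; apply/existsP; exists u; rewrite uS connect0. Qed.

Lemma reachS phi S S' : S \subset S' -> reach phi S \subset reach phi S'.
Proof.
move=> /subsetP sSS'; apply/subsetP=> v; rewrite !in_reach.
by case/existsP=> u /andP[uS c]; apply/existsP; exists u; rewrite sSS'.
Qed.

Lemma reach_connect phi S u v :
  u \in reach phi S -> connect (live phi) u v -> v \in reach phi S.
Proof.
rewrite !in_reach => /existsP[w /andP[wS c]] uv; apply/existsP; exists w.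
by rewrite wS (connect_trans c).
Qed.

Lemma reach_closed phi S u v :
  u \in reach phi S -> (u, v) \in phi -> v \in reach phi S.
Proof. by move=> uR uv; apply: reach_connect uR (connect1 _). Qed.

Lemma eq_reach phi phi' S :
  (forall e, e.1 \in reach phi S -> (e \in phi) = (e \in phi')) ->
  reach phi' S = reach phi S.
Proof.
move=> eq_out; apply/setP=> v; apply/idP/idP => [|vR].
- rewrite in_reach => /existsP[u /andP[uS c]].
  have [] := @connect_restrict _ (live phi') (live phi) (mem (reach phi S)) _ u v => //.
  + move=> a b /= aR ab; have ab' : (a, b) \in phi by rewrite eq_out.
    by split; first exact: reach_closed ab'.
  + exact: subsetP (sub_reach phi S) u uS.
- move: (vR); rewrite in_reach => /existsP[u /andP[uS c]].
  have [] := @connect_restrict _ (live phi) (live phi') (mem (reach phi S)) _ u v => //.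
  + move=> a b /= aR ab; split; first exact: reach_closed ab.
    by rewrite -(eq_out (a, b)).
  + exact: subsetP (sub_reach phi S) u uS.
  + by move=> _ c'; rewrite in_reach; apply/existsP; exists u; rewrite uS.
Qed.

Lemma Gammap_observe phi S : Gammap (observe phi S) = reach phi S.
Proof. by apply: eq_reach => e eR; rewrite inE eR andbT. Qed.

Lemma eq_observe phi phi' S :
  (forall e, e.1 \in reach phi S -> (e \in phi) = (e \in phi')) ->
  observe phi' S = observe phi S.
Proof.
move=> eq_out; rewrite /observe (eq_reach eq_out); congr pair.
apply/setP=> e; rewrite !inE -!in_reach.
by case: (boolP (e.1 \in reach phi S)) => [/eq_out->|]; rewrite ?andbF.
Qed.

Lemma observe_eq_dom phi S (psi : preal n) :
  (observe phi S == psi) = (S == psi.1) && (observe phi psi.1 == psi).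
Proof.
have [<-|ne] /= := eqVneq (observe phi S) psi; first by rewrite !eqxx.
by have [eS|] := eqVneq S psi.1; rewrite // -eS (negbTE ne).
Qed.

Definition prune phi Y : realization n :=
  [set e in phi | (e.1 \notin Y) && (e.2 \notin Y)].

Definition marginal phi Y j := reach (prune phi Y) ([set j] :\: Y).

Lemma eq_marginal phi phi' Y j :
  (forall e, e.1 \notin Y -> (e \in phi) = (e \in phi')) ->
  marginal phi Y j = marginal phi' Y j.
Proof.
move=> eq_out; congr reach; apply/setP=> e; rewrite !inE.
by case: (boolP (e.1 \in Y)) => [|/eq_out->]; rewrite ?andbF.
Qed.

Lemma marginal_set0 phi Y j : j \in Y -> marginal phi Y j = set0.
Proof.
move=> jY; apply/setP=> v; rewrite in_reach inE; apply/negbTE/existsP=> -[u].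
by rewrite !inE => /andP[/andP[uY /eqP uj]]; rewrite uj jY in uY.
Qed.

Lemma marginal_anti phi Y Y' j :
  Y \subset Y' -> marginal phi Y' j \subset marginal phi Y j.
Proof.
move=> /subsetP sYY'; apply/subsetP=> v; rewrite !in_reach.
case/existsP=> u /andP[uj c]; apply/existsP; exists u; apply/andP; split.
  by move: uj; rewrite !inE => /andP[/(contra (sYY' u))-> ->].
have [] := @connect_restrict _ (live (prune phi Y')) (live (prune phi Y)) predT _ u v => //.
move=> a b _ /=; rewrite !inE => /and3P[-> aY bY].
by rewrite (contra (sYY' a) aY) (contra (sYY' b) bY).
Qed.

Lemma marginal_notin phi Y j v : v \in marginal phi Y j -> v \notin Y.
Proof.
rewrite in_reach => /existsP[u /andP[uj c]].
have [] := @connect_restrict _ (live (prune phi Y)) (live (prune phi Y))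
  (fun w => w \notin Y) _ u v => //.
- by move=> a b _ ab; split => //; move: ab; rewrite /= inE => /and3P[].
- by move: uj; rewrite !inE => /andP[].
Qed.

Lemma marginal_sub phi Y j X : marginal phi Y j \subset reach phi (j |: X).
Proof.
apply/subsetP=> v; rewrite !in_reach => /existsP[u /andP[uj c]].
apply/existsP; exists u; apply/andP; split.
  by move: uj; rewrite !inE => /andP[_ ->].
have [] := @connect_restrict _ (live (prune phi Y)) (live phi) predT _ u v => //.
by move=> a b _; rewrite /= inE => /andP[].
Qed.

(* A path from [j] either meets [Y], and then ends in [reach phi X], or avoids
   [Y] altogether. *)
Lemma reach_setU1_sub phi X Y j :
  Y \subset reach phi X ->
  reach phi (j |: X) \subset reach phi X :|: marginal phi Y j.
Proof.
move=> /subsetP sYX; apply/subsetP=> v; rewrite in_reach inE.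
case/existsP=> u /andP[]; rewrite in_setU1 => /orP[/eqP-> {u} c | uX c]; last first.
  by rewrite in_reach; apply/orP; left; apply/existsP; exists u; rewrite uX.
have [jY | njY] := boolP (j \in Y).
  by apply/orP; left; exact: reach_connect (sYX j jY) c.
have [] := @connect_avoid_or _ (live phi) (mem Y) (mem (reach phi X)) _ _ j v njY c.
- by move=> a b /= aX ab; exact: reach_closed ab.
- exact: sYX.
- by move=> vX; apply/orP; left.
move=> c'; apply/orP; right; rewrite in_reach; apply/existsP; exists j.
rewrite !inE eqxx njY; apply: connect_sub c' => a b /= /and3P[ab aY bY].
by apply: connect1; rewrite /= inE ab aY bY.
Qed.

Lemma card_reach_setU1 phi S j :
  #|reach phi (j |: S)| = (#|reach phi S| + #|marginal phi (reach phi S) j|)%N.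
Proof.
have -> : reach phi (j |: S) = reach phi S :|: marginal phi (reach phi S) j.
  apply/eqP; rewrite eqEsubset reach_setU1_sub // subUset marginal_sub.
  by rewrite reachS ?subsetUr.
apply/eqP; rewrite (leq_card_setU _ _).2 disjoint_sym disjoint_subset.
by apply/subsetP=> v /marginal_notin.
Qed.

Lemma reach_setU_sub phi X Y D :
  Y \subset reach phi X ->
  reach phi (D :|: X) \subset reach phi X :|: \bigcup_(j in D) marginal phi Y j.
Proof.
move=> sYX; apply/subsetP=> v; rewrite in_reach => /existsP[u /andP[uDX c]].
have vR : v \in reach phi (u |: X).
  by rewrite in_reach; apply/existsP; exists u; rewrite setU11.
move: uDX; rewrite in_setU => /orP[uD | uX]; last first.
  by rewrite in_setU (reach_connect (subsetP (sub_reach phi X) u uX) c).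
move/subsetP/(_ v vR): (reach_setU1_sub u sYX).
rewrite !in_setU => /orP[-> // | vM]; apply/orP; right.
by apply/bigcupP; exists u.
Qed.

Lemma card_reach_setU_le phi X Y D :
  Y \subset reach phi X ->
  (#|reach phi (D :|: X)| <= #|reach phi X| + \sum_(j in D) #|marginal phi Y j|)%N.
Proof.
move=> /(reach_setU_sub D)/subset_leq_card/leq_trans; apply.
apply: leq_trans (leq_card_setU _ _) _; rewrite leq_add2l.
apply: (big_ind2 (fun (U : {set 'I_n}) s => #|U| <= s)%N) => [|U s V t|//].
  by rewrite cards0.
by move=> le_Us le_Vt; apply: leq_trans (leq_card_setU _ _) (leq_add _ _).
Qed.
End Reachability.

Section Expectation.
Variables (R : realType) (n : nat) (p : 'I_n -> 'I_n -> R).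
Hypothesis p01 : forall u v, 0 <= p u v <= 1.
Implicit Types (phi : realization n) (F H : realization n -> R).

Definition expect F := \sum_phi probR p phi * F phi.

Lemma probR_ge0 phi : 0 <= probR p phi.
Proof.
apply: prodr_ge0 => e _; have /andP[p_ge0 p_le1] := p01 e.1 e.2.
by case: ifP; rewrite ?subr_ge0.
Qed.

Lemma probR_sum1 : \sum_phi probR p phi = 1.
Proof.
transitivity (\prod_(e : 'I_n * 'I_n) (p e.1 e.2 + (1 - p e.1 e.2))).
  by rewrite bigA_distr; apply: eq_bigl.
by rewrite big1 // => e _; rewrite addrC subrK.
Qed.

Lemma eq_expect F H : F =1 H -> expect F = expect H.
Proof. by move=> eqFH; apply: eq_bigr => phi _; rewrite eqFH. Qed.

Lemma expect_ge0 F : (forall phi, 0 <= F phi) -> 0 <= expect F.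
Proof. by move=> F_ge0; apply: sumr_ge0 => phi _; rewrite mulr_ge0 ?probR_ge0. Qed.

Lemma ler_expect F H : (forall phi, F phi <= H phi) -> expect F <= expect H.
Proof. by move=> leFH; apply: ler_sum => phi _; rewrite ler_wpM2l ?probR_ge0. Qed.

Lemma expectD F H : expect (fun phi => F phi + H phi) = expect F + expect H.
Proof. by rewrite -big_split; apply: eq_bigr => phi _; rewrite mulrDr. Qed.

Lemma expect_sum (I : finType) (F : I -> realization n -> R) :
  expect (fun phi => \sum_i F i phi) = \sum_i expect (F i).
Proof. by rewrite exchange_big; apply: eq_bigr => phi _; rewrite mulr_sumr. Qed.

Definition mix (Q a b : realization n) : realization n := (a :&: Q) :|: (b :\: Q).

Lemma in_mix Q a b e : (e \in mix Q a b) = if e \in Q then e \in a else e \in b.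
Proof. by rewrite !inE; case: (e \in Q); rewrite ?andbT ?andbF ?orbF. Qed.

Lemma probR_mix Q a b :
  probR p a * probR p b = probR p (mix Q a b) * probR p (mix Q b a).
Proof.
rewrite /probR -!big_split; apply: eq_bigr => e _ /=; rewrite !in_mix.
by case: (e \in Q) => //; rewrite mulrC.
Qed.

(* Swapping the edges of [Q] between two independent realizations preserves
   their joint law, while [F] follows the first and [H] the second. *)
Lemma expect_mul_indep (Q : {set 'I_n * 'I_n}) F H :
  (forall a b : realization n, {in Q, a =i b} -> F a = F b) ->
  (forall a b : realization n, {in ~: Q, a =i b} -> H a = H b) ->
  expect (fun phi => F phi * H phi) = expect F * expect H.
Proof.
move=> eqF eqH; pose swap ab := (mix Q ab.1 ab.2, mix Q ab.2 ab.1).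
have swapK : involutive swap.
  by case=> a b; congr pair; apply/setP=> e; rewrite !in_mix; case: (e \in Q).
have mixQ a b : {in Q, mix Q a b =i a} by move=> e eQ; rewrite in_mix eQ.
have mixNQ a b : {in ~: Q, mix Q a b =i b}.
  by move=> e; rewrite in_setC => /negbTE eQ; rewrite in_mix eQ.
transitivity (\sum_(ab : realization n * realization n)
    probR p ab.1 * probR p ab.2 * (F ab.1 * H ab.1)).
  rewrite -(pair_bigA _ (fun a b => probR p a * probR p b * (F a * H a))) /=.
  apply: eq_bigr => a _.
  by rewrite -big_distrl -big_distrr /= probR_sum1 mulr1.
rewrite (reindex_inj (inv_inj swapK)) /expect big_distrlr pair_bigA /=.
apply: eq_bigr => -[a b] _ /=.
by rewrite -probR_mix (eqF _ _ (mixQ a b)) (eqH _ _ (mixNQ a b)) mulrACA.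
Qed.

Definition gain G j := expect (fun phi => #|marginal phi G j|%:R).

Lemma gain_ge0 G j : 0 <= gain G j.
Proof. by apply: expect_ge0 => phi; exact: ler0n. Qed.
End Expectation.

Section AdaptivePolicy.
Variables (R : realType) (n : nat) (p : 'I_n -> 'I_n -> R).
Hypothesis p01 : forall u v, 0 <= p u v <= 1.
Variables (pi : dpolicy n) (G : {set 'I_n}).
Implicit Types (phi a b : realization n) (Rs : {set 'I_n}).

Local Notation expect := (expect p).

Definition seeds k phi := iter k (pstep pi phi) set0.

Definition new_seeds k phi := seeds k.+1 phi :\: seeds k phi.

Lemma seedsS k phi : seeds k.+1 phi = pstep pi phi (seeds k phi).
Proof. by []. Qed.

Lemma seeds_subS k phi : seeds k phi \subset seeds k.+1 phi.
Proof. by rewrite seedsS /pstep; case: (pi _) => [i|]; rewrite ?subsetUr. Qed.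

Lemma eq_seeds k a b :
  (forall e, e.1 \in reach a (seeds k a) -> (e \in a) = (e \in b)) ->
  seeds k b = seeds k a.
Proof.
elim: k => [//|k IHk] eq_out.
have eq_out' e : e.1 \in reach a (seeds k a) -> (e \in a) = (e \in b).
  by move/(subsetP (reachS a (seeds_subS k a))); apply: eq_out.
by rewrite !seedsS (IHk eq_out') /pstep (eq_observe eq_out').
Qed.

Lemma eq_seeds_local k Rs a b :
  (forall e, e.1 \in Rs -> (e \in a) = (e \in b)) -> reach a (seeds k a) = Rs ->
  reach b (seeds k b) = Rs /\ new_seeds k b = new_seeds k a.
Proof.
move=> eq_out reachRs; rewrite -reachRs in eq_out *; have eq_k := eq_seeds eq_out.
by rewrite /new_seeds !seedsS eq_k (eq_reach eq_out) /pstep (eq_observe eq_out).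
Qed.

Lemma eq_seeds_event k Rs j a b :
  (forall e, e.1 \in Rs -> (e \in a) = (e \in b)) ->
  (reach a (seeds k a) == Rs) && (j \in new_seeds k a) =
  (reach b (seeds k b) == Rs) && (j \in new_seeds k b).
Proof.
move=> eq_out; have [ra|na] := eqVneq (reach a (seeds k a)) Rs.
  by have [-> ->] := eq_seeds_local eq_out ra; rewrite eqxx.
have [rb|//] := eqVneq (reach b (seeds k b)) Rs.
have [ra _] := eq_seeds_local (fun e eRs => esym (eq_out e eRs)) rb.
by rewrite ra eqxx in na.
Qed.

Lemma in_seedsS k phi j :
  (j \in seeds k.+1 phi)%:R = (j \in seeds k phi)%:R + (j \in new_seeds k phi)%:R :> R.
Proof.
rewrite in_setD; have := subsetP (seeds_subS k phi) j.
by case: (j \in seeds k phi) => [->|] //=; rewrite ?addr0 ?add0r.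
Qed.

Lemma card_reach_seedsS_le k phi :
  #|reach phi (seeds k.+1 phi :|: G)|%:R <= #|reach phi (seeds k phi :|: G)|%:R +
    \sum_j (j \in new_seeds k phi)%:R *
           #|marginal phi (reach phi (seeds k phi) :|: G) j|%:R :> R.
Proof.
have -> : seeds k.+1 phi :|: G = new_seeds k phi :|: (seeds k phi :|: G).
  apply/setP=> v; rewrite !in_setU in_setD; have := subsetP (seeds_subS k phi) v.
  by case: (v \in seeds k phi) => [->|] //=; rewrite orbF.
have sYX : reach phi (seeds k phi) :|: G \subset reach phi (seeds k phi :|: G).
  by rewrite subUset reachS ?subsetUl //= (subset_trans _ (sub_reach _ _)) ?subsetUr.
under eq_bigr do rewrite -natrM.
rewrite -natr_sum -natrD ler_nat; apply: leq_trans (card_reach_setU_le _ sYX) _.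
rewrite leq_add2l big_mkcond leq_sum // => j _.
by case: (j \in _); rewrite ?mul1n ?mul0n.
Qed.

(* Conditionally on the nodes [Rs] reached by step [k], the selection made at
   step [k] depends on the edges leaving [Rs] while the marginal spread beyond
   [Rs :|: G] depends on the other edges: the two are independent. *)
Lemma expect_new_marginal_le k j :
  expect (fun phi => (j \in new_seeds k phi)%:R *
                     #|marginal phi (reach phi (seeds k phi) :|: G) j|%:R)
  <= expect (fun phi => (j \in new_seeds k phi)%:R) * gain p G j.
Proof.
pose E Rs phi : R := ((reach phi (seeds k phi) == Rs) && (j \in new_seeds k phi))%:R.
have split_reach phi (X : {set 'I_n} -> R) :
    (j \in new_seeds k phi)%:R * X (reach phi (seeds k phi)) = \sum_Rs E Rs phi * X Rs.
  rewrite (bigD1 (reach phi (seeds k phi))) //= big1 ?addr0 => [|Rs /negbTE neRs].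
    by rewrite /E eqxx.
  by rewrite /E eq_sym neRs mul0r.
have E_local Rs a b : {in [set e | e.1 \in Rs], a =i b} -> E Rs a = E Rs b.
  by move=> ab; rewrite /E (@eq_seeds_event _ _ _ a b) // => e eRs; apply: ab; rewrite inE.
have marginal_local Rs a b :
    {in ~: [set e | e.1 \in Rs], a =i b} ->
    #|marginal a (Rs :|: G) j|%:R = #|marginal b (Rs :|: G) j|%:R :> R.
  move=> ab; suff -> : marginal a (Rs :|: G) j = marginal b (Rs :|: G) j by [].
  apply: eq_marginal => e.
  by rewrite in_setU negb_or => /andP[eRs _]; apply: ab; rewrite in_setC inE.
rewrite (eq_expect p (fun phi => split_reach phi (fun Rs => #|marginal phi (Rs :|: G) j|%:R))).
rewrite (eq_expect p (F := fun phi => (j \in new_seeds k phi)%:R)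
                   (H := fun phi => \sum_Rs E Rs phi)); last first.
  by move=> phi; have /= := split_reach phi (fun=> 1); rewrite mulr1 => ->; under eq_bigr do rewrite mulr1.
rewrite !(expect_sum p) big_distrl ler_sum // => Rs _.
rewrite (expect_mul_indep p (E_local Rs) (marginal_local Rs)) ler_wpM2l //.
  by apply: (expect_ge0 p01) => phi; exact: ler0n.
apply: (ler_expect p01) => phi; rewrite ler_nat subset_leq_card // marginal_anti //.
exact: subsetUr.
Qed.

Lemma expect_reach_seeds_le k :
  expect (fun phi => #|reach phi (seeds k phi :|: G)|%:R) <=
  sigma p G + \sum_j expect (fun phi => (j \in seeds k phi)%:R) * gain p G j.
Proof.
elim: k => [|k IHk].
  rewrite /seeds /= set0U big1 ?addr0 // => j _.
  by rewrite /expect big1 ?mul0r // => phi _; rewrite inE mulr0.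
apply: le_trans (ler_expect p01 (card_reach_seedsS_le k)) _.
rewrite expectD (expect_sum p).
under [X in _ <= _ + X]eq_bigr => j _.
  by rewrite (eq_expect p (fun phi => in_seedsS k phi j)) expectD mulrDl; over.
by rewrite big_split addrA lerD // ler_sum // => j _; apply: expect_new_marginal_le.
Qed.
End AdaptivePolicy.

Section FplusBound.
Variables (R : realType) (n : nat) (p : 'I_n -> 'I_n -> R).
Hypothesis p01 : forall u v, 0 <= p u v <= 1.
Variable G : {set 'I_n}.

Lemma spread_le mu :
  is_rpolicy mu -> spread p mu <= sigma p G + \sum_j selprob p mu j * gain p G j.
Proof.
case=> mu_ge0 mu_sum1.
have run_le pi : expect p (fun phi => #|reach phi (run pi phi)|%:R) <=
    sigma p G + \sum_j expect p (fun phi => (j \in run pi phi)%:R) * gain p G j.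
  apply: le_trans (expect_reach_seeds_le p01 pi G n); apply: (ler_expect p01) => phi.
  by rewrite ler_nat subset_leq_card // reachS // subsetUl.
apply: le_trans (ler_sum _ (fun pi _ => ler_wpM2l (mu_ge0 pi) (run_le pi))) _.
rewrite le_eqVlt; apply/predU1l.
under eq_bigr do rewrite mulrDr.
rewrite big_split /= -big_distrl /= mu_sum1 mul1r; congr (_ + _).
under eq_bigr do rewrite mulr_sumr.
rewrite exchange_big /=.
by apply: eq_bigr => j _; rewrite /selprob big_distrl; apply: eq_bigr => pi _; rewrite mulrA.
Qed.

Lemma fplus_le x :
  (forall i, 0 <= x i) -> fplus p x <= sigma p G + \sum_j x j * gain p G j.
Proof.
move=> x_ge0; rewrite /fplus; set A := (X in sup X).
have [->|/set0P neA] := eqVneq A classical_sets.set0.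
  rewrite sup0 addr_ge0 //; last by rewrite sumr_ge0 // => j _; rewrite mulr_ge0 ?gain_ge0.
  by apply: (expect_ge0 p01 (F := fun phi => #|reach phi G|%:R)) => phi; exact: ler0n.
apply: ge_sup neA _ => _ [mu [mu_pol mu_x ->]].
by under eq_bigr => j _ do rewrite -mu_x; exact: spread_le.
Qed.
End FplusBound.

Section JumpGain.
Variables (R : realType) (n : nat) (p : 'I_n -> 'I_n -> R).
Hypothesis p01 : forall u v, 0 <= p u v <= 1.
Variable psi : preal n.

Definition jump_gain (S2 : {set 'I_n}) : R :=
  expect p (fun phi => (observe phi psi.1 == psi)%:R *
                       (fval (observe phi S2) - fval (observe phi psi.1))).

Lemma jump_gain_id : jump_gain psi.1 = 0.
Proof. by rewrite /jump_gain /expect big1 // => phi _; rewrite subrr !mulr0. Qed.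

Lemma jump_gain_ge0 (S2 : {set 'I_n}) : psi.1 \subset S2 -> 0 <= jump_gain S2.
Proof.
move=> sub; apply: (expect_ge0 p01) => phi; rewrite mulr_ge0 // subr_ge0.
by rewrite /fval !Gammap_observe ler_nat subset_leq_card // reachS.
Qed.

Lemma eq_observe_event (a b : realization n) :
  (forall e, e.1 \in Gammap psi -> (e \in a) = (e \in b)) ->
  (observe a psi.1 == psi) = (observe b psi.1 == psi).
Proof.
have obs_local (c d : realization n) : (forall e, e.1 \in Gammap psi -> (e \in c) = (e \in d)) ->
    observe c psi.1 = psi -> observe d psi.1 = psi.
  move=> eq_cd obs_c; rewrite -[RHS]obs_c; apply: eq_observe => e.
  by rewrite -Gammap_observe obs_c; apply: eq_cd.
move=> eq_ab; apply/eqP/eqP; first exact: obs_local.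
by apply: obs_local => e /eq_ab.
Qed.

(* Given [Psi(t) = psi], seeding [j] adds the nodes reached from [j] avoiding
   [Gammap psi], which depend only on edges independent of the event. *)
Lemma jump_gain_setU1 j :
  jump_gain (j |: psi.1) =
  expect p (fun phi => (observe phi psi.1 == psi)%:R) * gain p (Gammap psi) j.
Proof.
rewrite /jump_gain (eq_expect p (H := fun phi =>
  (observe phi psi.1 == psi)%:R * #|marginal phi (Gammap psi) j|%:R)); last first.
  move=> phi; have [obs|] := eqVneq (observe phi psi.1) psi; last by rewrite !mul0r.
  have reach_psi : reach phi psi.1 = Gammap psi by rewrite -[in RHS]obs Gammap_observe.
  rewrite /fval !Gammap_observe card_reach_setU1 natrD reach_psi.
  by rewrite addrAC subrr add0r.
apply: (expect_mul_indep p (Q := [set e | e.1 \in Gammap psi])) => a b ab.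
  by rewrite (@eq_observe_event a b) // => e eG; apply: ab; rewrite inE.
suff -> : marginal a (Gammap psi) j = marginal b (Gammap psi) j by [].
by apply: eq_marginal => e eG; apply: ab; rewrite in_setC inE.
Qed.
End JumpGain.

Section Rates.
Variable R : realType.
Local Open Scope classical_set_scope.

Lemma cvg_expR_rate (a : R) :
  (fun h => h^-1 * (1 - expR (- (a * h)))) @ 0^'+ --> a.
Proof.
pose g := expR \o (fun h : R => - (a * h)).
have g'0 : is_derive (0 : R) 1 g (expR (- (a * 0)) * - a).
  apply: is_derive1_comp; rewrite (_ : (fun h => _) = - (a *: id)) //.
  by apply: is_deriveN; apply: trigger_derive; last exact: mulr1.
rewrite mulr0 oppr0 expR0 mul1r in g'0.
have : (fun h => h^-1 *: ((g \o shift 0) (h *: 1) - g 0)) @ 0^' --> - a.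
  by rewrite -[X in _ --> X](derive_val (is_derive := g'0)); exact: ex_derive.
move=> /cvg_dnbhs_at_right/cvgN; rewrite opprK opprfctE; apply: cvg_trans.
apply: near_eq_cvg; apply: nearW => h /=.
by rewrite /g /= mulr0 oppr0 expR0 addr0 -[h%:A]/(h * 1) mulr1 -[_ *: _]/(_ * _) -mulrN opprB.
Qed.

Variables (n : nat) (x : 'I_n -> R) (t : R).
Hypotheses (x_ge0 : forall i, 0 <= x i) (t_ge0 : 0 <= t).
Implicit Types (S : {set 'I_n}) (dt : R).

Definition clock_factor dt S1 S2 i : R :=
  if i \in S1 then 1 - expR (- (x i * t))
  else if i \in S2 then expR (- (x i * t)) * (1 - expR (- (x i * dt)))
  else expR (- (x i * (t + dt))).

Lemma clock2E dt S1 S2 :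
  clock2 x t dt S1 S2 = (S1 \subset S2)%:R * \prod_i clock_factor dt S1 S2 i.
Proof. by []. Qed.

Lemma clock_factor0_ge0 S1 S2 i : 0 <= clock_factor 0 S1 S2 i.
Proof.
rewrite /clock_factor mulr0 oppr0 expR0 subrr mulr0.
case: (i \in S1); last by case: (i \in S2); rewrite ?expR_ge0.
by rewrite subr_ge0 expR_le1 oppr_le0 mulr_ge0.
Qed.

Lemma clock_factor_cvg S1 S2 i :
  (fun dt => clock_factor dt S1 S2 i) @ 0^'+ --> clock_factor 0 S1 S2 i.
Proof.
have expR_cvg (f : R -> R) : f @ 0 --> f 0 ->
    (fun dt => expR (- (x i * f dt))) @ 0 --> expR (- (x i * f 0)).
  move=> f_cvg; apply: continuous_cvg; first exact: continuous_expR.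
  by apply: cvgN; apply: cvgM; [exact: cvg_cst | exact: f_cvg].
apply: cvg_at_right_filter; rewrite /clock_factor.
case: (i \in S1); first exact: cvg_cst.
case: (i \in S2); last exact: (expR_cvg (fun dt => t + dt) (cvgD (cvg_cst t) cvg_id)).
apply: cvgM; first exact: cvg_cst.
by apply: cvgB; [exact: cvg_cst | exact: (expR_cvg id cvg_id)].
Qed.

(* The factor of [j] is [O(dt)], and the factors of the other nodes of
   [S2 :\: S1] tend to [0]: the limit vanishes unless [S2 = j |: S1]. *)
Lemma clock2_rate_cvg S1 S2 j : S1 \subset S2 -> j \in S2 :\: S1 ->
  (fun dt => dt^-1 * clock2 x t dt S1 S2) @ 0^'+ -->
  expR (- (x j * t)) * x j * \prod_(i | i != j) clock_factor 0 S1 S2 i.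
Proof.
move=> sub; rewrite in_setD => /andP[jS1 jS2].
rewrite (_ : (fun dt => _) = fun dt => expR (- (x j * t)) *
    (dt^-1 * (1 - expR (- (x j * dt)))) * \prod_(i | i != j) clock_factor dt S1 S2 i).
  apply: cvgM; first by apply: cvgM; [exact: cvg_cst | exact: cvg_expR_rate].
  by apply: cvg_big => // [|i _]; [exact: mul_continuous | exact: clock_factor_cvg].
apply/funext => dt; rewrite clock2E sub mul1r (bigD1 j) //=.
by rewrite {1}/clock_factor (negbTE jS1) jS2; ring.
Qed.

(* Only meaningful for [S1 != S2]: for [S1 = S2] the quotient diverges and
   [lim] returns an unspecified value. *)
Definition jump_rate S1 S2 : R :=
  lim ((fun dt => dt^-1 * clock2 x t dt S1 S2) @ 0^'+).

Lemma jump_rate_cvg S1 S2 : S1 != S2 ->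
  (fun dt => dt^-1 * clock2 x t dt S1 S2) @ 0^'+ --> jump_rate S1 S2.
Proof.
move=> neq; rewrite /jump_rate; have [sub|nsub] := boolP (S1 \subset S2); last first.
  rewrite (_ : (fun dt => _) = fun=> 0); first exact: cvgP (cvg_cst _).
  by apply/funext => dt; rewrite clock2E (negbTE nsub) mul0r mulr0.
have /properP[_ [j jS2 jS1]] : S1 \proper S2 by rewrite properEneq neq.
by apply: cvgP (clock2_rate_cvg sub (_ : j \in _)); rewrite in_setD jS1 jS2.
Qed.

Lemma jump_rateE S1 S2 j : S1 \subset S2 -> j \in S2 :\: S1 ->
  jump_rate S1 S2 = expR (- (x j * t)) * x j * \prod_(i | i != j) clock_factor 0 S1 S2 i.
Proof. by move=> sub jS; apply: cvg_lim; [exact: Rhausdorff | exact: clock2_rate_cvg]. Qed.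

Lemma jump_rate_nsub S1 S2 : ~~ (S1 \subset S2) -> jump_rate S1 S2 = 0.
Proof.
move=> nsub; rewrite /jump_rate (_ : (fun dt => _) = fun=> 0) ?lim_cst //.
by apply/funext => dt; rewrite clock2E (negbTE nsub) mul0r mulr0.
Qed.

Lemma jump_rate_ge0 S1 S2 : S1 \proper S2 -> 0 <= jump_rate S1 S2.
Proof.
case/properP=> sub [j jS2 jS1].
rewrite (jump_rateE sub (_ : j \in _)) ?in_setD ?jS1 //.
by rewrite !mulr_ge0 ?expR_ge0 ?prodr_ge0 // => i _; exact: clock_factor0_ge0.
Qed.

Lemma jump_rate_setU1 S j : j \notin S -> jump_rate S (j |: S) = x j * clock1 x t S.
Proof.
move=> jS; rewrite (jump_rateE (subsetUr _ _) (_ : j \in _)); last first.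
  by rewrite in_setD jS setU11.
rewrite /clock1 [in RHS](bigD1 j) //= (negbTE jS) mulrCA -mulrA; congr (_ * (_ * _)).
apply: eq_bigr => i ij; rewrite /clock_factor in_setU1 (negbTE ij) /=.
by case: (i \in S); rewrite ?addr0.
Qed.
End Rates.

Section ConditionalRate.
Variables (R : realType) (n : nat) (p : 'I_n -> 'I_n -> R) (x : 'I_n -> R) (t : R).
Hypotheses (p01 : forall u v, 0 <= p u v <= 1) (x_ge0 : forall i, 0 <= x i).
Hypothesis t_ge0 : 0 <= t.
Variable psi : preal n.
Local Open Scope classical_set_scope.

Local Notation S := psi.1.
Local Notation P := (probPsi p x t psi).

Lemma probPsiE :
  P = clock1 x t S * expect p (fun phi => (observe phi S == psi)%:R).
Proof.
rewrite /probPsi /expect mulr_sumr; apply: eq_bigr => phi _.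
rewrite (bigD1 S) //= big1 ?addr0 => [|S1 neS1]; first by rewrite mulrCA mulrA.
by rewrite observe_eq_dom (negbTE neS1) mulr0.
Qed.

Lemma condDiffE dt :
  condDiff p x t dt psi = (\sum_S2 clock2 x t dt S S2 * jump_gain p psi S2) / P.
Proof.
rewrite /condDiff /jump_gain /expect; congr (_ / _).
under [RHS]eq_bigr => S2 _ do rewrite mulr_sumr.
rewrite [RHS]exchange_big /=; apply: eq_bigr => phi _.
rewrite [LHS](bigD1 S) //= [X in _ + X]big1 ?addr0 => [|S1 neS1]; last first.
  by apply: big1 => S2 _; rewrite observe_eq_dom (negbTE neS1) mulr0 mul0r.
by apply: eq_bigr => S2 _; ring.
Qed.

Lemma cond_rate_cvg :
  (fun dt => dt^-1 * condDiff p x t dt psi) @ 0^'+ -->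
  \sum_S2 jump_rate x t S S2 * (jump_gain p psi S2 / P).
Proof.
rewrite (_ : (fun dt => _) =
    fun dt => \sum_S2 dt^-1 * clock2 x t dt S S2 * (jump_gain p psi S2 / P)).
  apply: cvg_big => // [|S2 _]; first exact: add_continuous.
  have [<-|neq] := eqVneq S S2.
    by rewrite jump_gain_id mul0r mulr0; under eq_cvg do rewrite mulr0; exact: cvg_cst.
  by apply: cvgM; [exact: jump_rate_cvg | exact: cvg_cst].
apply/funext => dt; rewrite condDiffE mulr_suml mulr_sumr.
by apply: eq_bigr => S2 _; rewrite !mulrA.
Qed.

Hypothesis P_gt0 : 0 < P.

Lemma jump_term_ge0 S2 : 0 <= jump_rate x t S S2 * (jump_gain p psi S2 / P).
Proof.
have [<-|neq] := eqVneq S S2; first by rewrite jump_gain_id mul0r mulr0.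
have [sub|nsub] := boolP (S \subset S2); last by rewrite jump_rate_nsub ?mul0r.
have proper : S \proper S2 by rewrite properEneq neq.
by rewrite mulr_ge0 ?divr_ge0 ?(jump_rate_ge0 x_ge0 t_ge0) ?(jump_gain_ge0 p01) ?ltW.
Qed.

Lemma jump_term_setU1 j : j \notin S ->
  jump_rate x t S (j |: S) * (jump_gain p psi (j |: S) / P) =
  x j * gain p (Gammap psi) j.
Proof.
move=> jS; rewrite jump_rate_setU1 // jump_gain_setU1 [in X in _ / X]probPsiE.
have : P != 0 by rewrite gt_eqF.
rewrite probPsiE mulf_eq0 negb_or => /andP[c1_neq0 obs_neq0].
by field; rewrite c1_neq0 obs_neq0.
Qed.

Lemma cond_rate_ge :
  \sum_j x j * gain p (Gammap psi) j <=
  \sum_S2 jump_rate x t S S2 * (jump_gain p psi S2 / P).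
Proof.
rewrite (bigID (mem S)) /= big1 ?add0r => [|j jS]; last first.
  rewrite /gain /expect big1 ?mulr0 // => phi _.
  by rewrite marginal_set0 ?cards0 ?mulr0 // (subsetP (sub_reach _ _)).
have inj : {in ~: S &, injective (fun j => j |: S)}.
  move=> j k; rewrite !inE => jS kS eq_jk.
  by have := setU11 j S; rewrite eq_jk in_setU1 (negbTE jS) orbF => /eqP.
rewrite [X in _ <= X](bigID (mem ((fun j => j |: S) @: ~: S))) /=.
apply: ler_wpDr; first by apply: sumr_ge0 => S2 _; exact: jump_term_ge0.
rewrite (big_imset _ inj) le_eqVlt; apply/predU1l.
by apply: eq_big => [j|j /jump_term_setU1 //]; rewrite in_setC.
Qed.
End ConditionalRate.

Unset Implicit Arguments. Set Strict Implicit.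
Local Open Scope classical_set_scope.

Theorem lemma2 (R : realType) (n : nat) (p : 'I_n -> 'I_n -> R) (x : 'I_n -> R) :
  (forall u v, 0 <= p u v <= 1) ->
  (forall i, 0 <= x i <= 1) ->
  forall t : R, 0 <= t <= 1 ->
  forall psi : preal n, 0 < probPsi p x t psi ->
  exists L : R,
    (fun dt : R => dt^-1 * condDiff p x t dt psi) @ 0^'+ --> L /\
    fplus p x - sigma p (Gammap psi) <= L.
Proof.
move=> p01 x01 t t01 psi P_gt0.
have x_ge0 i : 0 <= x i by case/andP: (x01 i).
have t_ge0 : 0 <= t by case/andP: t01.
exists (\sum_S2 jump_rate x t psi.1 S2 * (jump_gain p psi S2 / probPsi p x t psi)).
split; first exact: cond_rate_cvg.
rewrite lerBlDl; apply: le_trans (fplus_le p01 (Gammap psi) x_ge0) _.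
by rewrite lerD2l cond_rate_ge.
Qed.
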